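(* Let $\mathcal{G}_{\curlywedge}=(G,o,\curlywedge,R_1,\ldots,R_n)$ be a functional Menger $\curlywedge$-algebra of rank $n$ and let $H$ be a nonempty subset of $G$. Then $H$ is a stabilizer of $\mathcal{G}_{\curlywedge}$ if and only if: (1) $H$ is quasi-stable, $\curlywedge$-stable and $v$-unitary; (2) there exists a subset $U\subseteq G$ with $H\subseteq U$, $R_iU\subseteq H$ and $R_i(G\setminus U)\subseteq G\setminus U$ for every $i\in\{1,\ldots,n\}$, such that (3) for all $x,y\in G$: if $x\in U$ and $y\in H$ then $y[R_1x\ldots R_nx]\in H$; and if $x\in U$ and $y\in U$ then $y[R_1x\ldots R_nx]\in U$.
   Context: A functional Menger system of rank $n$ is a nonempty set $G$ with an $(n+1)$-ary operation $o\colon(x_0,x_1,\ldots,x_n)\mapsto x_0[x_1\ldots x_n]$ and unary operations $R_1,\ldots,R_n$ satisfying, for all $i,k\in\{1,\ldots,n\}$ and all elements: (A1) $x[y_1\ldots y_n][z_1\ldots z_n]=x[y_1[z_1\ldots z_n]\ldots y_n[z_1\ldots z_n]]$; (A2) $x[R_1x\ldots R_nx]=x$; (A3) $x[\bar u\,|_iz][R_1y\ldots R_ny]=x[\bar u\,|_iz[R_1y\ldots R_ny]]$; (A4) $R_ix[R_1y\ldots R_ny]=(R_ix)[R_1y\ldots R_ny]$; (A5) $x[R_1y\ldots R_ny][R_1z\ldots R_nz]=x[R_1z\ldots R_nz][R_1y\ldots R_ny]$; (A6) $R_ix[y_1\ldots y_n]=R_i(R_kx)[y_1\ldots y_n]$;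 (A7) $(R_ix)[y_1\ldots y_n]=y_i[R_1(x[y_1\ldots y_n])\ldots R_n(x[y_1\ldots y_n])]$. Here $x[\bar u\,|_iz]$ denotes $x[u_1\ldots u_{i-1}\,z\,u_{i+1}\ldots u_n]$, and $R_ix[\ldots]$ means $R_i(x[\ldots])$. A functional Menger $\curlywedge$-algebra of rank $n$ is an algebra $(G,o,\curlywedge,R_1,\ldots,R_n)$ such that $(G,o,R_1,\ldots,R_n)$ is a functional Menger system of rank $n$, $(G,\curlywedge)$ is a semilattice, and (A8) $x\curlywedge y[R_1z\ldots R_nz]=(x\curlywedge y)[R_1z\ldots R_nz]$; (A9) $x\curlywedge y=x[R_1(x\curlywedge y)\ldots R_n(x\curlywedge y)]$; (A10) $(x\curlywedge y)[z_1\ldots z_n]=x[z_1\ldots z_n]\curlywedge y[z_1\ldots z_n]$. For a set $A$, $\mathcal F(A^n,A)$ is the set of partial maps $A^n\to A$ (viewed as subsets of $A^n\times A$). The Menger composition $f[g_1\ldots g_n]$ is the partial function $\bar a\mapsto f(g_1(\bar a),\ldots,g_n(\bar a))$ (defined exactly when the right side is defined), and $\mathcal R_if$ is the partial function with the same domain as $f$ given by $(a_1,\ldots,a_n)\mapsto a_i$. A representation of $\mathcal G_\curlywedge$ by $n$-place functions on a set $A$ is a map $P\colon G\to\mathcal F(A^n,A)$ with $P(x[y_1\ldots y_n])=P(x)[P(y_1)\ldots P(y_n)]$, $P(R_ix)=\mathcal R_iP(x)$ and $P(x\curlywedge y)=P(x)\cap P(y)$ (set-theoretic intersection). A nonempty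 $H\subseteq G$ is a stabilizer of $\mathcal G_\curlywedge$ if there exist such a representation $P$ on some set $A$ and a point $a\in A$ with $H=\{g\in G: P(g)(a,\ldots,a)=a\}$. A nonempty $H\subseteq G$ is quasi-stable if $x\in H\Rightarrow x[x\ldots x]\in H$; $\curlywedge$-stable if $x,y\in H\Rightarrow x\curlywedge y\in H$; $v$-unitary if $x[y_1\ldots y_n]\in H$ and $y_1,\ldots,y_n\in H$ imply $x\in H$. *)

(* 'I_n is the index set {1..n} (shifted to {0..n-1}). *)
From mathcomp Require Import all_boot.
Set Implicit Arguments. Unset Strict Implicit. Unset Printing Implicit Defensive.

Section Menger.
Variables (G : Type) (n : nat).
Variable o : G -> ('I_n -> G) -> G.          (* o x ys = x[ys_1 ... ys_n] *)
Variable meet : G -> G -> G.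
Variable R : 'I_n -> G -> G.

Definition Rv (y : G) : 'I_n -> G := fun i => R i y.

Definition upd (u : 'I_n -> G) (i : 'I_n) (z : G) : 'I_n -> G :=
  fun j => if j == i then z else u j.

Definition functional_Menger_system : Prop :=
  (forall x y z, o (o x y) z = o x (fun i => o (y i) z)) /\
  (forall x, o x (Rv x) = x) /\
  (forall x u z y i,
     o (o x (upd u i z)) (Rv y) = o x (upd u i (o z (Rv y)))) /\
  (forall i x y, R i (o x (Rv y)) = o (R i x) (Rv y)) /\
  (forall x y z, o (o x (Rv y)) (Rv z) = o (o x (Rv z)) (Rv y)) /\
  (forall i k x y, R i (o x y) = R i (o (R k x) y)) /\
  (forall i x y, o (R i x) y = o (y i) (Rv (o x y))).

Definition semilattice : Prop :=
  [/\ (forall x y z, meet x (meet y z) = meet (meet x y) z),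
      (forall x y, meet x y = meet y x)
    & (forall x, meet x x = x)].

Definition functional_Menger_meet_algebra : Prop :=
  [/\ functional_Menger_system,
      semilattice,
      (forall x y z, meet x (o y (Rv z)) = o (meet x y) (Rv z)),
      (forall x y, meet x y = o x (Rv (meet x y)))
    & (forall x y z, o (meet x y) z = meet (o x z) (o y z))].

(* Partial n-place functions on A are maps A^n -> option A; their graphs are
   the subsets of A^n x A of the paper.  The conditions below state equality
   of graphs (as subsets of A^n x A). *)
Definition is_representation (A : Type) (P : G -> ('I_n -> A) -> option A) : Prop :=
  [/\ (forall x ys (a : 'I_n -> A) (b : A),
         P (o x ys) a = Some b <->
         exists c : 'I_n -> A, (forall i, P (ys i) a = Some (c i)) /\ P x c = Some b),
      (forall i x (a : 'I_n -> A) (b : A),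
         P (R i x) a = Some b <-> (exists c, P x a = Some c) /\ b = a i)
    & (forall x y (a : 'I_n -> A) (b : A),
         P (meet x y) a = Some b <-> P x a = Some b /\ P y a = Some b)].

Definition stabilizer (H : G -> Prop) : Prop :=
  exists (A : Type) (P : G -> ('I_n -> A) -> option A) (a : A),
    is_representation P /\ (forall g, H g <-> P g (fun _ => a) = Some a).

Definition quasi_stable (H : G -> Prop) : Prop :=
  forall x, H x -> H (o x (fun _ => x)).

Definition meet_stable (H : G -> Prop) : Prop :=
  forall x y, H x -> H y -> H (meet x y).

Definition v_unitary (H : G -> Prop) : Prop :=
  forall x ys, H (o x ys) -> (forall i, H (ys i)) -> H x.

End Menger.

From mathcomp Require Import all_boot.
From Stdlib Require Import Classical ClassicalEpsilon FunctionalExtensionality PropExtensionality.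

Set Implicit Arguments. Unset Strict Implicit. Unset Printing Implicit Defensive.

(* Necessity: for the stabilizer of a point a, take U to be the set of g
   defined at (a, ..., a); every condition is then a direct reading of the
   representation axioms.
   Sufficiency: on U, the relation x ~ y := U (x ⋏ y) is an equivalence, and
   composition respects it: replacing the arguments w_i of x[w] one at a time
   by w_i ⋏ v_i is a restriction by R(w_i ⋏ v_i) (axiom A3), which neither
   enters nor leaves U.  The classes are the points of a representation in
   which g sends (c_1, ..., c_n) to the class of g[z_1 ... z_n] for
   representatives z_i, when g[z] lies in U.  H is itself a class, and the
   elements fixing it are exactly those of H. *)

Definition stab_domain (G : Type) (n : nat) (o : G -> ('I_n -> G) -> G)
    (R : 'I_n -> G -> G) (H U : G -> Prop) : Prop :=
  (forall x, H x -> U x) /\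
  (forall i x, U x -> H (R i x)) /\
  (forall i x, ~ U x -> ~ U (R i x)) /\
  (forall x y, U x -> H y -> H (o y (Rv R x))) /\
  (forall x y, U x -> U y -> U (o y (Rv R x))).

Section Necessity.
Variables (G : Type) (n : nat) (o : G -> ('I_n -> G) -> G) (meet : G -> G -> G)
  (R : 'I_n -> G -> G) (A : Type) (P : G -> ('I_n -> A) -> option A) (a : A).
Hypothesis P_repr : is_representation o meet R P.

Let diag : 'I_n -> A := fun=> a.
Let fixes (g : G) : Prop := P g diag = Some a.
Let defined (g : G) : Prop := exists b, P g diag = Some b.

Lemma fixes_R i x : defined x -> fixes (R i x).
Proof. by case: P_repr => _ P_R _ xdiag; apply/P_R. Qed.

Lemma fixes_quasi_stable : quasi_stable o fixes.
Proof. by case: P_repr => P_comp _ _ x xa; apply/P_comp; exists diag. Qed.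

Lemma fixes_meet_stable : meet_stable meet fixes.
Proof. by case: P_repr => _ _ P_meet x y xa ya; apply/P_meet. Qed.

Lemma fixes_v_unitary : v_unitary o fixes.
Proof.
case: P_repr => P_comp _ _ x ys /P_comp[c [ysc xc]] ysa.
suff diag_c : diag = c by rewrite /fixes diag_c.
by apply: functional_extensionality => i; move: (ysa i); rewrite /fixes ysc => -[].
Qed.

Lemma defined_stab_domain : stab_domain o R fixes defined.
Proof.
case: P_repr => P_comp P_R _.
split; first by move=> x xa; exists a.
split; first by move=> i x /fixes_R.
split; first by move=> i x xndef [b /P_R[xdef _]].
split=> [x y xdef ya | x y xdef [b yb]].
- by apply/P_comp; exists diag; split=> // i; apply: fixes_R.
- by exists b; apply/P_comp; exists diag; split=> // i; apply: fixes_R.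
Qed.

End Necessity.

Lemma stabilizer_necessary (G : Type) (n : nat) (o : G -> ('I_n -> G) -> G)
    (meet : G -> G -> G) (R : 'I_n -> G -> G) (H : G -> Prop) :
  stabilizer o meet R H ->
  (quasi_stable o H /\ meet_stable meet H /\ v_unitary o H) /\
  exists U, stab_domain o R H U.
Proof.
case=> A [P [a [P_repr HP]]].
have -> : H = fun g => P g (fun=> a) = Some a.
  by apply: functional_extensionality => g; apply: propositional_extensionality; apply: HP.
split; last by eexists; exact: defined_stab_domain P_repr.
split; first exact: fixes_quasi_stable P_repr.
by split; [apply: fixes_meet_stable P_repr | apply: fixes_v_unitary P_repr].
Qed.

Section Sufficiency.
Variables (G : Type) (n : nat) (o : G -> ('I_n -> G) -> G) (meet : G -> G -> G)
  (R : 'I_n -> G -> G) (H U : G -> Prop) (h0 : G).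

Local Notation restr x y := (o x (Rv R y)).

Hypothesis n_gt0 : 0 < n.
Hypothesis compA : forall x y z, o (o x y) z = o x (fun i => o (y i) z).
Hypothesis restr_upd : forall x u z y i,
  restr (o x (upd u i z)) y = o x (upd u i (restr z y)).
Hypothesis R_restr : forall i x y, R i (restr x y) = restr (R i x) y.
Hypothesis R_compR : forall i k x y, R i (o x y) = R i (o (R k x) y).
Hypothesis compR : forall i x y, o (R i x) y = restr (y i) (o x y).
Hypothesis meetA : forall x y z, meet x (meet y z) = meet (meet x y) z.
Hypothesis meetC : forall x y, meet x y = meet y x.
Hypothesis meetxx : forall x, meet x x = x.
Hypothesis meet_restrr : forall x y z, meet x (restr y z) = restr (meet x y) z.
Hypothesis meet_restr : forall x y, meet x y = restr x (meet x y).
Hypothesis comp_meetl : forall x y z, o (meet x y) z = meet (o x z) (o y z).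
Hypothesis H_quasi_stable : quasi_stable o H.
Hypothesis H_meet_stable : meet_stable meet H.
Hypothesis H_v_unitary : v_unitary o H.
Hypothesis H_sub_U : forall x, H x -> U x.
Hypothesis R_U_H : forall i x, U x -> H (R i x).
Hypothesis R_notU : forall i x, ~ U x -> ~ U (R i x).
Hypothesis restr_H : forall x y, U x -> H y -> H (restr y x).
Hypothesis restr_U : forall x y, U x -> U y -> U (restr y x).
Hypothesis H_h0 : H h0.

Let i0 : 'I_n := Ordinal n_gt0.

Lemma U_of_R k x : U (R k x) -> U x.
Proof. by move=> URx; apply: NNPP => /(R_notU (i := k)). Qed.

Lemma U_restr_inv x y : U x -> U (restr y x) -> U y.
Proof.
move=> Ux Uyx; apply: (U_of_R (k := i0)); apply/H_sub_U/(H_v_unitary (ys := Rv R x)).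
  by rewrite -R_restr; apply: R_U_H.
by move=> j; apply: R_U_H.
Qed.

Lemma U_restr x y : U x -> U (restr y x) <-> U y.
Proof. by move=> Ux; split; [apply: U_restr_inv | apply: restr_U]. Qed.

Lemma U_meetl x y : U (meet x y) -> U x.
Proof. by move=> Uxy; apply: (U_restr_inv Uxy); rewrite -meet_restr. Qed.

Lemma U_meetr x y : U (meet x y) -> U y.
Proof. by rewrite meetC; apply: U_meetl. Qed.

Lemma H_meetl x y : H (meet x y) -> H x.
Proof.
move=> Hxy; apply: (H_v_unitary (ys := Rv R (meet x y))); first by rewrite -meet_restr.
by move=> j; apply/R_U_H/H_sub_U.
Qed.

Lemma U_comp_R i x w : U (o (R i x) w) <-> U (o x w).
Proof.
have R_eq : R i0 (o (R i x) w) = R i0 (o x w) by rewrite -R_compR.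
by split=> /(R_U_H i0)/H_sub_U; [rewrite R_eq | rewrite -R_eq] => /U_of_R.
Qed.

Lemma U_comp_arg x w j : U (o x w) -> U (w j).
Proof. by move=> Uxw; apply: (U_restr_inv Uxw); rewrite -compR U_comp_R. Qed.

Definition sim (x y : G) : Prop := U (meet x y).

Lemma simxx x : sim x x <-> U x.
Proof. by rewrite /sim meetxx. Qed.

Lemma simC x y : sim x y -> sim y x.
Proof. by rewrite /sim meetC. Qed.

Lemma sim_trans x y z : sim x y -> sim y z -> sim x z.
Proof.
rewrite /sim => Uxy Uyz; set u := meet x y.
have xu : restr x u = u by rewrite -meet_restr.
have yu : restr y u = u by rewrite /u meetC -meet_restr.
apply: (U_restr_inv Uxy).
by rewrite meetC -meet_restrr xu -yu meet_restrr meetC; apply: restr_U.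
Qed.

Lemma sim_restr x y z : U z -> sim (restr x z) (restr y z) <-> sim x y.
Proof.
move=> Uz; rewrite /sim meet_restrr U_restr // meetC meet_restrr U_restr //.
by split; apply: simC.
Qed.

Lemma sim_H h x : H h -> sim x h <-> H x.
Proof.
move=> Hh; split=> [simxh | Hx]; last exact/H_sub_U/H_meet_stable.
apply: (@H_meetl _ h); rewrite meetC meet_restr; apply: restr_H => //.
by rewrite meetC.
Qed.

Lemma sim_class x y : sim x y -> sim x = sim y.
Proof.
move=> xy; apply: functional_extensionality => z; apply: propositional_extensionality.
by split=> [/(sim_trans (simC xy)) | /(sim_trans xy)].
Qed.

Lemma class_sim x y : U x -> sim x = sim y -> sim x y.
Proof. by move=> /simxx xx xy; rewrite xy in xx; apply: simC. Qed.

Lemma sim_eq_H x : sim x = H <-> H x.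
Proof.
split=> [xH | Hx]; first by apply/(sim_H _ H_h0); rewrite xH.
apply: functional_extensionality => y; apply: propositional_extensionality.
by split=> [/simC /(sim_H _ Hx) | /(sim_H _ Hx) /simC].
Qed.

Lemma sim_meetl x y : U (meet x y) -> sim (meet x y) = sim x.
Proof. by move=> Uxy; apply: sim_class; rewrite /sim meetC meetA meetxx. Qed.

Lemma sim_meetr x y : U (meet x y) -> sim (meet x y) = sim y.
Proof. by rewrite meetC; apply: sim_meetl. Qed.

Lemma sim_restr_self x y : U y -> U x -> sim (restr x y) = sim x.
Proof.
by move=> Uy Ux; apply: sim_class; rewrite /sim meetC meet_restrr meetxx; apply: restr_U.
Qed.

Definition mix (s m : 'I_n -> G) (k : nat) : 'I_n -> G :=
  fun i => if i < k then m i else s i.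

Lemma mixn s m : mix s m n = m.
Proof. by apply: functional_extensionality => i; rewrite /mix ltn_ord. Qed.

Lemma comp_mixS x s m k (lt_kn : k < n) :
  (forall j, restr (s j) (m j) = m j) ->
  o x (mix s m k.+1) = restr (o x (mix s m k)) (m (Ordinal lt_kn)).
Proof.
move=> sm; set j := Ordinal lt_kn.
have -> : mix s m k = upd (mix s m k) j (s j).
  by apply: functional_extensionality => i; rewrite /upd /mix; case: eqP => [->|]; rewrite ?ltnn.
rewrite restr_upd sm; congr (o x _); apply: functional_extensionality => i.
rewrite /upd /mix ltnS leq_eqVlt (_ : (i == k :> nat) = (i == j)) //.
by case: eqP => [-> | _].
Qed.

Lemma comp_mix_invariant (Q : G -> G -> Prop) x w v m :
    (forall j, restr (w j) (m j) = m j) -> (forall j, restr (v j) (m j) = m j) ->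
    (forall a b j, Q (restr a (m j)) (restr b (m j)) <-> Q a b) ->
  Q (o x m) (o x m) <-> Q (o x w) (o x v).
Proof.
move=> wm vm Qrestr.
suff : forall k, k <= n -> Q (o x (mix w m k)) (o x (mix v m k)) <-> Q (o x w) (o x v).
  by move/(_ n (leqnn n)); rewrite !mixn.
elim=> [|k IHk] lt_kn //.
by rewrite (comp_mixS _ lt_kn wm) (comp_mixS _ lt_kn vm) Qrestr; apply/IHk/ltnW.
Qed.

Lemma comp_class x w v : (forall i, sim (w i) (v i)) -> U (o x w) ->
  U (o x v) /\ sim (o x w) = sim (o x v).
Proof.
move=> wv Uxw; set m := fun i => meet (w i) (v i).
have wm j : restr (w j) (m j) = m j by rewrite -meet_restr.
have vm j : restr (v j) (m j) = m j by rewrite /m meetC -meet_restr.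
have Uxm : U (o x m).
  rewrite (comp_mix_invariant (Q := fun a _ => U a) x wm wm) //.
  by move=> a b j; apply: U_restr; apply: wv.
have simxwv : sim (o x w) (o x v).
  rewrite -(comp_mix_invariant (Q := sim) x wm vm) ?simxx // => a b j.
  by apply: sim_restr; apply: wv.
split; last exact: sim_class.
by apply: (@U_meetl _ (o x w)); rewrite meetC.
Qed.

Definition is_class (c : G -> Prop) : Prop := exists z, U z /\ sim z = c.

Definition rep (c : G -> Prop) : G := epsilon (inhabits h0) (fun z => U z /\ sim z = c).

Lemma rep_spec c : is_class c -> U (rep c) /\ sim (rep c) = c.
Proof. exact: epsilon_spec. Qed.

Definition act (g : G) (c : 'I_n -> G -> Prop) : option (G -> Prop) :=
  if excluded_middle_informative
       ((forall i, is_class (c i)) /\ U (o g (fun i => rep (c i))))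
  then Some (sim (o g (fun i => rep (c i)))) else None.

Lemma act_classes g c b : act g c = Some b -> forall i, is_class (c i).
Proof. by rewrite /act; case: excluded_middle_informative => // -[]. Qed.

Lemma act_Some g c z b : (forall i, U (z i) /\ sim (z i) = c i) ->
  act g c = Some b <-> U (o g z) /\ sim (o g z) = b.
Proof.
move=> zc; have cls_c i : is_class (c i) by exists (z i).
have rep_z i : sim (rep (c i)) (z i).
  have [Urep rep_c] := rep_spec (cls_c i).
  by apply: class_sim; rewrite // rep_c (zc i).2.
rewrite /act; case: excluded_middle_informative => [def | not_def] /=.
  have [Uz ->] := comp_class rep_z def.2.
  by split=> [[<-] | [_ <-]].
split=> // -[Uz _]; case: not_def; split=> //.
by apply: (comp_class _ Uz).1 => i; apply: simC.
Qed.

Lemma act_comp x ys c b :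
  act (o x ys) c = Some b <-> exists d, (forall i, act (ys i) c = Some (d i)) /\ act x d = Some b.
Proof.
have [cls_c | ncls_c] := classic (forall i, is_class (c i)); last first.
  by split=> [/act_classes | [d [/(_ i0)/act_classes]]].
pose z i := rep (c i); have zc i : U (z i) /\ sim (z i) = c i := rep_spec (cls_c i).
pose z' i := o (ys i) z.
rewrite (act_Some _ _ zc) compA -/z'; split=> [[Uxz' <-] | [d [ysd xd]]].
- have z'c i : U (z' i) /\ sim (z' i) = sim (z' i) by split=> //; apply: U_comp_arg Uxz'.
  exists (fun i => sim (z' i)); split=> [i|]; first by apply/(act_Some _ _ zc); apply: z'c.
  by apply/(act_Some _ _ z'c).
- have z'd i : U (z' i) /\ sim (z' i) = d i := (act_Some _ _ zc).1 (ysd i).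
  exact: (act_Some _ _ z'd).1 xd.
Qed.

Lemma act_R i x c b :
  act (R i x) c = Some b <-> (exists e, act x c = Some e) /\ b = c i.
Proof.
have [cls_c | ncls_c] := classic (forall i, is_class (c i)); last first.
  by split=> [/act_classes | [[e /act_classes]]].
pose z i := rep (c i); have zc i : U (z i) /\ sim (z i) = c i := rep_spec (cls_c i).
have [Uzi zic] := zc i.
rewrite (act_Some _ _ zc) U_comp_R compR.
split=> [[Uxz <-] | [[e /(act_Some _ _ zc) [Uxz _]] ->]].
- split; first by exists (sim (o x z)); apply/(act_Some _ _ zc).
  by rewrite sim_restr_self.
- by split=> //; rewrite sim_restr_self.
Qed.

Lemma act_meet x y c b :
  act (meet x y) c = Some b <-> act x c = Some b /\ act y c = Some b.
Proof.
have [cls_c | ncls_c] := classic (forall i, is_class (c i)); last first.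
  by split=> [/act_classes | [/act_classes]].
pose z i := rep (c i); have zc i : U (z i) /\ sim (z i) = c i := rep_spec (cls_c i).
rewrite !(act_Some _ _ zc) comp_meetl.
split=> [[Uxy <-] | [[Ux <-] [Uy yx]]].
- have [xy_x xy_y] := (sim_meetl Uxy, sim_meetr Uxy).
  by split; split; [apply: U_meetl Uxy | rewrite xy_x | apply: U_meetr Uxy | rewrite xy_y].
- have Uxy : U (meet (o x z) (o y z)) by apply: class_sim; rewrite ?yx.
  by split=> //; apply: sim_meetl.
Qed.

Lemma act_representation : is_representation o meet R act.
Proof. by split; [apply: act_comp | apply: act_R | apply: act_meet]. Qed.

Lemma H_comp_const g z : H z -> H (o g (fun=> z)) <-> H g.
Proof.
move=> Hz; split=> [Hgz | Hg]; first exact: (H_v_unitary Hgz).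
set m := meet g z; have Hm : H m := H_meet_stable Hg Hz.
have Hgm : H (o g (fun=> m)).
  by apply: (@H_meetl _ (o z (fun=> m))); rewrite -comp_meetl; apply: H_quasi_stable.
have mz : sim m z by apply/(sim_H _ Hz).
have [_ gmz] := comp_class (w := fun=> m) (v := fun=> z) (fun=> mz) (H_sub_U Hgm).
by apply/sim_eq_H; rewrite -gmz; apply/sim_eq_H.
Qed.

Lemma H_is_class : is_class H.
Proof. by exists h0; split; [apply: H_sub_U | apply/sim_eq_H]. Qed.

Theorem stabilizer_sufficient : stabilizer o meet R H.
Proof.
have [Urep repH] := rep_spec H_is_class.
have Hrep : H (rep H) by apply/sim_eq_H.
exists (G -> Prop), act, H; split=> [|g]; first exact: act_representation.
rewrite (act_Some g H (c := fun=> H) (z := fun=> rep H)) // sim_eq_H H_comp_const //.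
by split=> [Hg | [] //]; split=> //; apply/H_sub_U/H_comp_const.
Qed.

End Sufficiency.

Theorem theorem4 (G : Type) (n : nat) (hn : 0 < n)
    (o : G -> ('I_n -> G) -> G) (meet : G -> G -> G) (R : 'I_n -> G -> G)
    (hG : functional_Menger_meet_algebra o meet R)
    (H : G -> Prop) (hH : exists h, H h) :
  stabilizer o meet R H <->
  ((quasi_stable o H /\ meet_stable meet H /\ v_unitary o H) /\
   exists U : G -> Prop,
     (forall x, H x -> U x) /\
     (forall i x, U x -> H (R i x)) /\
     (forall i x, ~ U x -> ~ U (R i x)) /\
     (forall x y, U x -> H y -> H (o y (Rv R x))) /\
     (forall x y, U x -> U y -> U (o y (Rv R x)))).
Proof.
split; first exact: stabilizer_necessary.
move=> [[H_qs [H_ms H_vu]] [U [H_U [RU_H [R_notU [restr_H restr_U]]]]]].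
have [h0 Hh0] := hH.
have [[compA [_ [restr_upd [R_restr [_ [R_compR compR]]]]]] [meetA meetC meetxx]
      meet_restrr meet_restr comp_meetl] := hG.
exact: (stabilizer_sufficient hn compA restr_upd R_restr R_compR compR meetA meetC meetxx
          meet_restrr meet_restr comp_meetl H_qs H_ms H_vu H_U RU_H R_notU restr_H restr_U Hh0).
Qed.
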